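(* Let $(A,\gamma)$ be a quasiordered set and let $\{\alpha_i\mid i\in I\}$ be a half-space realizer of $\gamma$ with $|I|\ge2$. Then there exists a family $(R_i)_{i\in I}$, indexed by the same set $I$, of linear extensions of the induced partial order $r_\gamma$ on $A/(\gamma\cap\gamma^{-1})$ such that $\bigcap_{i\in I}R_i=r_\gamma$.
   Context: A quasiorder on $A$ is a reflexive and transitive relation; $\Delta_A=\{(a,a)\mid a\in A\}$. A quasiorder $\alpha$ on $A$ is a half-space if there is a quasiorder $\beta$ on $A$ with $\alpha\cup\beta=A\times A$ and $\alpha\cap\beta=\Delta_A$. A half-space realizer of a quasiorder $\gamma$ on $A$ is a set $\{\alpha_i\mid i\in I\}$ of half-spaces on $A$ with $\bigcap_{i\in I}\alpha_i=\gamma$. For a quasiorder $\gamma$, $r_\gamma$ is the induced partial order on $A/(\gamma\cap\gamma^{-1})$: $([a],[b])\in r_\gamma$ iff $(a,b)\in\gamma$. *)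

Set Implicit Arguments.

Definition quasiorder (A : Type) (r : A -> A -> Prop) : Prop :=
  (forall a, r a a) /\ (forall a b c, r a b -> r b c -> r a c).

Definition half_space (A : Type) (alpha : A -> A -> Prop) : Prop :=
  quasiorder alpha /\
  exists beta : A -> A -> Prop,
    quasiorder beta /\
    (forall a b, alpha a b \/ beta a b) /\
    (forall a b, (alpha a b /\ beta a b) <-> a = b).

Definition half_space_realizer (A I : Type) (alpha : I -> A -> A -> Prop)
  (gamma : A -> A -> Prop) : Prop :=
  (forall i, half_space (alpha i)) /\
  (forall a b, (forall i, alpha i a b) <-> gamma a b).

Definition qclass (A : Type) (gamma : A -> A -> Prop) (a : A) : A -> Prop :=
  fun b => gamma a b /\ gamma b a.

Definition quot (A : Type) (gamma : A -> A -> Prop) : Type :=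
  { X : A -> Prop | exists a, X = qclass gamma a }.

Definition r_gamma (A : Type) (gamma : A -> A -> Prop) (X Y : quot gamma) : Prop :=
  exists a b, proj1_sig X = qclass gamma a /\ proj1_sig Y = qclass gamma b /\ gamma a b.

Definition partial_order (T : Type) (R : T -> T -> Prop) : Prop :=
  (forall x, R x x) /\
  (forall x y, R x y -> R y x -> x = y) /\
  (forall x y z, R x y -> R y z -> R x z).

Definition linear_extension (T : Type) (r R : T -> T -> Prop) : Prop :=
  partial_order R /\ (forall x y, R x y \/ R y x) /\ (forall x y, r x y -> R x y).

(* The strict part of a half-space is negatively transitive, hence a strict
   weak order, and each of its ties is either an equivalence class or an
   antichain of the half-space.  For every index i we order A by the strict part
   of [alpha i] first; ties are ordered by the quasiorder "b is strictly below a
   in no [alpha j]", reversed on antichains, and what remains tied is ordered by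
   a fixed linear order of A/gamma, at one index i0 as it is and at every other
   index reversed.  Each of these quasiorders contains gamma and has the same
   symmetric part, and whenever not [gamma a b] one of them puts b before a:
   some [alpha j] already does, or a and b form an antichain tie of some
   [alpha i], or they are tied everywhere and i0 or another index decides.
   Linear extensions (Szpilrajn) of the induced partial orders on A/gamma then
   meet in r_gamma. *)

From mathcomp Require Import ssreflect ssrfun classical_sets boolp.
From Stdlib Require Import Classical.

Set Implicit Arguments.

Local Open Scope classical_set_scope.

Section Szpilrajn.
Variable T : Type.

Lemma eq_partial_order : partial_order (@eq T).
Proof. by split; [|split] => // x y z -> ->. Qed.

Lemma partial_order_add_pair (R : T -> T -> Prop) x y :
  partial_order R -> ~ R y x ->
  partial_order (fun u v => R u v \/ (R u x /\ R y v)).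
Proof.
move=> [Rr [Ra Rt]] Nyx; split; [|split].
- by move=> u; left.
- move=> u v [uv|[ux yv]] [vu|[vx yu]]; first exact: Ra.
  + by case: Nyx; apply: Rt yu (Rt _ _ _ uv vx).
  + by case: Nyx; apply: Rt (Rt _ _ _ yv vu) ux.
  + by case: Nyx; apply: Rt yv vx.
- move=> u v w [uv|[ux yv]] [vw|[vx yw]].
  + by left; apply: Rt uv vw.
  + by right; split => //; apply: Rt uv vx.
  + by right; split => //; apply: Rt yv vw.
  + by case: Nyx; apply: Rt yv vx.
Qed.

Variable P : T -> T -> Prop.
Hypothesis poP : partial_order P.

(* Zorn's lemma is applied to the sets of pairs [X] making [P] plus [X] a
   partial order: unlike partial orders containing [P], these are closed under
   unions of arbitrary (also empty) chains. *)
Let ext (X : set (T * T)) u v := P u v \/ X (u, v).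

Let ext_chain_union (F : set (set (T * T))) :
  F `<=` (fun X => partial_order (ext X)) -> total_on F subset ->
  partial_order (ext (\bigcup_(X in F) X)).
Proof.
move=> poF totF.
have in_member X u v : F X -> ext X u v -> ext (\bigcup_(X in F) X) u v.
  by move=> FX [uv|uv]; [left|right; exists X].
have common_member u v w z :
    ext (\bigcup_(X in F) X) u v -> ext (\bigcup_(X in F) X) w z ->
    (P u v /\ P w z) \/ exists2 X, F X & ext X u v /\ ext X w z.
  move=> [uv|[X1 FX1 uv]] [wz|[X2 FX2 wz]].
  - by left.
  - by right; exists X2 => //; split; [left|right].
  - by right; exists X1 => //; split; [right|left].
  - right; case: (totF _ _ FX1 FX2) => sub12.
    + by exists X2 => //; split; right => //; apply: sub12.
    + by exists X1 => //; split; right => //; apply: sub12.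
case: poP => _ [Pa Pt]; split; [|split].
- by move=> x; left; case: poP.
- move=> x y xy yx; case: (common_member _ _ _ _ xy yx).
  + by case=> [{}xy {}yx]; apply: Pa.
  + by case=> X /poF [_ [Xa _]] [{}xy {}yx]; apply: Xa.
- move=> x y z xy yz; case: (common_member _ _ _ _ xy yz).
  + by case=> [{}xy {}yz]; left; apply: Pt xy yz.
  + case=> X FX [{}xy {}yz]; apply: (in_member X) => //.
    by case: (poF X FX) => _ [_ Xt]; apply: Xt xy yz.
Qed.

Lemma szpilrajn : exists L, linear_extension P L.
Proof.
have [X [poX Xmax]] := Zorn_bigcup ext_chain_union.
exists (ext X); split; [exact: poX|split; last by move=> x y xy; left].
move=> x y; apply: NNPP => incomparable_xy.
have Nxy : ~ ext X x y by move=> xy; apply: incomparable_xy; left.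
have Nyx : ~ ext X y x by move=> yx; apply: incomparable_xy; right.
pose B : set (T * T) := fun p => X p \/ (ext X p.1 x /\ ext X y p.2).
have extB : ext B = fun u v => ext X u v \/ (ext X u x /\ ext X y v).
  apply: funext => u; apply: funext => v; apply: propext; split.
  - by case=> [uv|[uv|uv]]; [left; left|left; right|right].
  - by case=> [[uv|uv]|uv]; [left|right; left|right; right].
apply: (Xmax B); last by rewrite extB; apply: partial_order_add_pair.
split; first by move=> p Xp; left.
have [ext_refl _] := poX.
by move=> BX; apply: Nxy; right; apply: BX; right; split; apply: ext_refl.
Qed.
End Szpilrajn.

Definition strict_part (T : Type) (R : T -> T -> Prop) a b := R a b /\ ~ R b a.
Definition tie (T : Type) (lt : T -> T -> Prop) a b := ~ lt a b /\ ~ lt b a.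
Definition break_ties (T : Type) (lt E : T -> T -> Prop) a b :=
  lt a b \/ (tie lt a b /\ E a b).
Definition lex (T : Type) (R S : T -> T -> Prop) a b := R a b /\ (R b a -> S a b).

Section Relations.
Variable T : Type.
Implicit Types (R S : T -> T -> Prop) (a b c : T).

Lemma strict_part_trans R :
  (forall a b c, R a b -> R b c -> R a c) ->
  forall a b c, strict_part R a b -> strict_part R b c -> strict_part R a c.
Proof.
move=> Rt a b c [ab nba] [bc ncb]; split; first exact: Rt ab bc.
by move=> ca; apply: ncb; apply: Rt ca ab.
Qed.

Lemma tie_strict_part R a b : tie (strict_part R) a b -> R a b -> R b a.
Proof. by move=> [nab _] ab; apply: NNPP => nba; apply: nab. Qed.

Lemma lex_refl R S a : R a a -> S a a -> lex R S a a.
Proof. by move=> Ra Sa; split. Qed.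

Lemma lex_trans R S :
  (forall a b c, R a b -> R b c -> R a c) ->
  (forall a b c, S a b -> S b c -> S a c) ->
  forall a b c, lex R S a b -> lex R S b c -> lex R S a c.
Proof.
move=> Rt St a b c [ab Sab] [bc Sbc]; split; first exact: Rt ab bc.
by move=> ca; apply: St (Sab (Rt _ _ _ bc ca)) (Sbc (Rt _ _ _ ca ab)).
Qed.

Lemma lex_sym R S a b : lex R S a b -> lex R S b a -> S a b /\ S b a.
Proof. by move=> [ab Sab] [ba Sba]; split; [apply: Sab|apply: Sba]. Qed.
End Relations.

Section StrictWeakOrder.
Variables (T : Type) (lt : T -> T -> Prop).
Hypothesis lt_irr : forall a, ~ lt a a.
Hypothesis lt_trans : forall a b c, lt a b -> lt b c -> lt a c.
Hypothesis lt_negtrans : forall a b c, lt a c -> lt a b \/ lt b c.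

Lemma lt_tie_trans a b c : lt a b -> tie lt b c -> lt a c.
Proof. by move=> ab [_ ncb]; case: (lt_negtrans c ab). Qed.

Lemma tie_lt_trans a b c : tie lt a b -> lt b c -> lt a c.
Proof. by move=> [_ nba] bc; case: (lt_negtrans a bc). Qed.

Lemma tie_trans a b c : tie lt a b -> tie lt b c -> tie lt a c.
Proof.
move=> [nab nba] [nbc ncb]; split.
- by move=> /(lt_negtrans b) [].
- by move=> /(lt_negtrans b) [].
Qed.

Variable E : T -> T -> Prop.

Lemma break_ties_trans :
  (forall a b c, tie lt a b -> tie lt b c -> E a b -> E b c -> E a c) ->
  forall a b c, break_ties lt E a b -> break_ties lt E b c -> break_ties lt E a c.
Proof.
move=> Et a b c [ab|[tab Eab]] [bc|[tbc Ebc]].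
- by left; apply: lt_trans ab bc.
- by left; apply: lt_tie_trans ab tbc.
- by left; apply: tie_lt_trans tab bc.
- by right; split; [apply: tie_trans tab tbc|apply: Et Eab Ebc].
Qed.

Lemma break_ties_sym a b :
  break_ties lt E a b -> break_ties lt E b a -> tie lt a b /\ E a b /\ E b a.
Proof.
move=> [ab|[tab Eab]] [ba|[tba Eba]] //.
- by case: (lt_irr (lt_trans ab ba)).
- by case: tba => _ [].
- by case: tab => _ [].
Qed.
End StrictWeakOrder.

Section HalfSpace.
Variables (A : Type) (al : A -> A -> Prop).
Hypothesis hs : half_space al.

Lemma half_space_trans {a b c} : al a b -> al b c -> al a c.
Proof. by case: hs => [[_ alt] _]; apply: alt. Qed.

(* Otherwise [be x y] and [be y z] for the complementary quasiorder [be], so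
   [be x z], which with [al x z] forces [x = z]. *)
Lemma half_space_cotrans x y z : x <> z -> al x z -> al x y \/ al y z.
Proof.
move=> nxz xz; apply: NNPP => /not_or_and [nxy nyz].
case: hs => _ [be [[_ bet] [al_or_be al_and_be]]].
have bxy : be x y by case: (al_or_be x y).
have byz : be y z by case: (al_or_be y z).
by apply: nxz; apply/al_and_be; split => //; apply: bet bxy byz.
Qed.

Lemma half_space_strict_negtrans a b c :
  strict_part al a c -> strict_part al a b \/ strict_part al b c.
Proof.
move=> [ac nca]; have nac : a <> c by move=> e; rewrite e in ac nca.
case: (half_space_cotrans b nac ac) => [ab|bc].
- case: (classic (al b a)) => ba; last by left.
  right; split; first exact: half_space_trans ba ac.
  by move=> cb; apply: nca; apply: half_space_trans cb ba.
- case: (classic (al c b)) => cb; last by right.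
  left; split; first exact: half_space_trans ac cb.
  by move=> ba; apply: nca; apply: half_space_trans cb ba.
Qed.

Lemma half_space_comparable x y z :
  x <> y -> al x y -> al y x -> al y z \/ al z y.
Proof.
move=> nxy xy yx; case: (half_space_cotrans z nxy xy) => [xz|]; last by right.
by left; apply: half_space_trans yx xz.
Qed.

Lemma half_space_incomparable_trans a b c :
  a <> c -> ~ al a b -> ~ al b c -> ~ al a c.
Proof. by move=> nac nab nbc /(half_space_cotrans b nac) []. Qed.
End HalfSpace.

Lemma linear_extensions_realize {T I : Type} {r : T -> T -> Prop}
    {P R : I -> T -> T -> Prop} :
  (forall x, r x x) ->
  (forall i x y, r x y -> P i x y) ->
  (forall x y, ~ r x y -> exists i, P i y x) ->
  (forall i, linear_extension (P i) (R i)) ->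
  (forall i, linear_extension r (R i)) /\
  (forall x y, (forall i, R i x y) <-> r x y).
Proof.
move=> r_refl rP reversed linR; split.
  move=> i; have [poR [totR PR]] := linR i.
  by split=> //; split=> // x y /(rP i); apply: PR.
move=> x y; split=> [Rxy|rxy i]; last by have [_ [_ PR]] := linR i; apply/PR/rP.
apply: NNPP => nrxy; have [i Pyx] := reversed _ _ nrxy.
have [[_ [Ra _]] [_ PR]] := linR i.
by apply: nrxy; rewrite (Ra _ _ (Rxy i) (PR _ _ Pyx)).
Qed.

Section Quotient.
Variables (A : Type) (gamma : A -> A -> Prop).
Hypothesis qo : quasiorder gamma.

Definition cls (a : A) : quot gamma :=
  exist _ (qclass gamma a) (ex_intro _ a erefl).

Definition qlift (C : A -> A -> Prop) (X Y : quot gamma) : Prop :=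
  exists a b,
    proj1_sig X = qclass gamma a /\ proj1_sig Y = qclass gamma b /\ C a b.

Lemma cls_surj (X : quot gamma) : exists a, X = cls a.
Proof. by case: X => S [a e]; subst S; exists a. Qed.

Lemma cls_eq a b : gamma a b -> gamma b a -> cls a = cls b.
Proof.
case: qo => _ gt ab ba; apply: eq_exist; apply: funext => x; apply: propext.
by split=> -[xa ax]; split;
  [apply: gt ba xa|apply: gt ax ab|apply: gt ab xa|apply: gt ax ba].
Qed.

Lemma qclass_inj a b : qclass gamma a = qclass gamma b -> gamma a b /\ gamma b a.
Proof.
case: qo => gr _ e; have : qclass gamma b b by split; apply: gr.
by rewrite -e.
Qed.

Lemma cls_inj a b : cls a = cls b -> gamma a b /\ gamma b a.
Proof. by move=> /(f_equal (@proj1_sig _ _)) /qclass_inj. Qed.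

Variable C : A -> A -> Prop.
Hypothesis C_trans : forall a b c, C a b -> C b c -> C a c.
Hypothesis gamma_C : forall a b, gamma a b -> C a b.
Hypothesis C_sym : forall a b, C a b -> C b a -> gamma a b.

Lemma qlift_cls a b : qlift C (cls a) (cls b) <-> C a b.
Proof.
split=> [[a' [b' [/qclass_inj [aa' _] [/qclass_inj [_ b'b] Cab]]]]|Cab].
  by apply: C_trans (gamma_C aa') (C_trans Cab (gamma_C b'b)).
by exists a, b.
Qed.

Lemma qlift_partial_order : partial_order (qlift C).
Proof.
have [gr _] := qo; split; [|split].
- by move=> X; have [a ->] := cls_surj X; apply/qlift_cls/gamma_C/gr.
- move=> X Y; have [a ->] := cls_surj X; have [b ->] := cls_surj Y.
  by move=> /qlift_cls ab /qlift_cls ba; apply: cls_eq; apply: C_sym.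
- move=> X Y Z; have [a ->] := cls_surj X; have [b ->] := cls_surj Y.
  have [c ->] := cls_surj Z.
  by move=> /qlift_cls ab /qlift_cls bc; apply/qlift_cls; apply: C_trans ab bc.
Qed.

Lemma r_gamma_qlift (X Y : quot gamma) : r_gamma X Y -> qlift C X Y.
Proof.
move=> [a [b [Xa [Yb ab]]]]; exists a, b.
by split=> //; split=> //; apply: gamma_C.
Qed.
End Quotient.

Arguments qlift {A} gamma C.

Section Construction.
Variables (A I : Type) (gamma : A -> A -> Prop) (alpha : I -> A -> A -> Prop).
Hypothesis qo : quasiorder gamma.
Hypothesis hs : forall i, half_space (alpha i).
Hypothesis realizes : forall a b, (forall i, alpha i a b) <-> gamma a b.
Variables (i0 j0 : I).
Hypothesis i0_neq_j0 : i0 <> j0.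
Variable L : quot gamma -> quot gamma -> Prop.
Hypothesis L_po : partial_order L.
Hypothesis L_total : forall X Y, L X Y \/ L Y X.

Let M a b := L (cls gamma a) (cls gamma b).

Definition never_above a b := forall j, ~ strict_part (alpha j) b a.
Definition tiebreak i a b := (i = i0 -> M a b) /\ (i <> i0 -> M b a).

(* On a tie of [alpha i], [alpha i a b] tells an [alpha i]-equivalence class
   (ordered by [never_above]) from an antichain (ordered by its reverse). *)
Definition tie_order i a b :=
  (alpha i a b -> lex never_above (tiebreak i) a b) /\
  (~ alpha i a b -> lex (fun x y => never_above y x) (tiebreak i) a b).

Definition realizer_order i := break_ties (strict_part (alpha i)) (tie_order i).

Lemma never_above_trans a b c :
  never_above a b -> never_above b c -> never_above a c.
Proof.
move=> ab bc j /(half_space_strict_negtrans (hs j) b) [].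
- exact: bc.
- exact: ab.
Qed.

Lemma tiebreak_trans i a b c : tiebreak i a b -> tiebreak i b c -> tiebreak i a c.
Proof.
have [_ [_ Lt]] := L_po.
move=> [ab ba] [bc cb]; split=> e.
- exact: Lt (ab e) (bc e).
- exact: Lt (cb e) (ba e).
Qed.

Lemma tiebreak_sym i a b : tiebreak i a b -> tiebreak i b a -> gamma a b.
Proof.
have [_ [La _]] := L_po.
move=> [ab ba] [ab' ba']; case: (classic (i = i0)) => e.
- by have /(cls_inj qo)[] := La _ _ (ab e) (ab' e).
- by have /(cls_inj qo)[] := La _ _ (ba' e) (ba e).
Qed.

Lemma tie_order_refl i a : tie_order i a a.
Proof.
have tb : tiebreak i a a by have [Lr _] := L_po; split=> _; apply: Lr.
by split=> _; apply: lex_refl => // j [].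
Qed.

Lemma tie_order_trans i a b c :
  tie (strict_part (alpha i)) a b -> tie (strict_part (alpha i)) b c ->
  tie_order i a b -> tie_order i b c -> tie_order i a c.
Proof.
have above_trans := never_above_trans; have tb_trans := @tiebreak_trans i.
have below_trans x y z : never_above y x -> never_above z y -> never_above z x.
  by move=> yx zy; apply: above_trans zy yx.
move=> tab tbc Kab Kbc.
case: (classic (alpha i a b)) => ab; case: (classic (alpha i b c)) => bc.
- split=> [_|]; last by move=> /(_ (half_space_trans (hs i) ab bc)).
  exact: lex_trans above_trans tb_trans _ _ _ (proj1 Kab ab) (proj1 Kbc bc).
- case: (classic (a = b)) => [-> //|nab].
  case: (half_space_comparable (hs i) c nab ab (tie_strict_part tab ab)) => // cb.
  by case: tbc => _ []; split.
- case: (classic (b = c)) => [<- //|nbc].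
  have cb := tie_strict_part tbc bc.
  case: (half_space_comparable (hs i) a (nesym nbc) cb bc) => // ba.
  by case: tab => _ []; split.
- case: (classic (a = c)) => [<-|nac]; first exact: tie_order_refl.
  split=> [/(half_space_incomparable_trans (hs i) b nac ab bc) //|_].
  exact: lex_trans below_trans tb_trans _ _ _ (proj2 Kab ab) (proj2 Kbc bc).
Qed.

Lemma realizer_order_trans i a b c :
  realizer_order i a b -> realizer_order i b c -> realizer_order i a c.
Proof.
apply: (break_ties_trans _ _ (@tie_order_trans i)).
- exact: strict_part_trans (@half_space_trans _ _ (hs i)).
- exact: half_space_strict_negtrans.
Qed.

Lemma never_above_of_gamma a b : gamma a b -> never_above a b.
Proof. by move=> /realizes ab j [_]; apply. Qed.

Lemma gamma_of_never_above a b : gamma a b -> never_above b a -> gamma b a.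
Proof.
move=> /realizes ab ba; apply/realizes => j.
by apply: NNPP => nba; apply: (ba j); split.
Qed.

Lemma gamma_realizer_order i a b : gamma a b -> realizer_order i a b.
Proof.
move=> gab; have ab := proj2 (realizes a b) gab i.
case: (classic (alpha i b a)) => ba; last by left.
right; split; first by split=> -[].
split=> // _; split=> [|/(gamma_of_never_above gab) gba].
  exact: never_above_of_gamma.
by have [Lr _] := L_po; split=> _; rewrite /M (cls_eq qo _ _ gab gba); apply: Lr.
Qed.

Lemma realizer_order_sym i a b :
  realizer_order i a b -> realizer_order i b a -> gamma a b.
Proof.
move=> Cab Cba; have irr x : ~ strict_part (alpha i) x x by case.
have [tab [Kab Kba]] :=
  break_ties_sym irr (strict_part_trans (@half_space_trans _ _ (hs i))) Cab Cba.
suff [tb_ab tb_ba] : tiebreak i a b /\ tiebreak i b a.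
  exact: tiebreak_sym tb_ab tb_ba.
case: (classic (alpha i a b)) => ab.
- exact: lex_sym (proj1 Kab ab) (proj1 Kba (tie_strict_part tab ab)).
- have ba : ~ alpha i b a.
    by move=> ba; apply: ab; apply: tie_strict_part ba; case: tab.
  exact: lex_sym (proj2 Kab ab) (proj2 Kba ba).
Qed.

Lemma realizer_order_reverses a b : ~ gamma a b -> exists i, realizer_order i b a.
Proof.
move=> ngab.
case: (classic (exists j, strict_part (alpha j) b a)) => [[j ba]|no_ba].
  by exists j; left.
have ab : never_above a b by move=> j ba; apply: no_ba; exists j.
have [i nab] : exists i, ~ alpha i a b.
  apply: NNPP => all_ab; apply/ngab/realizes => i.
  by apply: NNPP => nab; apply: all_ab; exists i.
case: (classic (never_above b a)) => [ba|nba]; last first.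
  exists i; right; split.
    by split=> [|[]] //; apply: ab.
  split=> [ba|_]; first by case: (ab i).
  by split=> // /nba.
have ordered j : tiebreak j b a -> realizer_order j b a.
  by move=> tb; right; split; [split; [apply: ab|apply: ba]|split=> _; split].
case: (L_total (cls gamma a) (cls gamma b)) => [Lab|Lba].
- by exists j0; apply: ordered; split=> // /esym.
- by exists i0; apply: ordered; split.
Qed.

Lemma qlift_realizer_order_partial_order i :
  partial_order (qlift gamma (realizer_order i)).
Proof.
apply: qlift_partial_order => //.
- exact: realizer_order_trans.
- exact: gamma_realizer_order.
- exact: realizer_order_sym.
Qed.

Lemma qlift_realizer_order_reverses (X Y : quot gamma) :
  ~ r_gamma X Y -> exists i, qlift gamma (realizer_order i) Y X.
Proof.
have [a ->] := cls_surj X; have [b ->] := cls_surj Y => nXY.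
have [|i ba] := @realizer_order_reverses a b.
  by move=> gab; apply: nXY; exists a, b.
by exists i, b, a.
Qed.

Lemma realizer_linear_extensions :
  exists R : I -> quot gamma -> quot gamma -> Prop,
    (forall i, linear_extension (@r_gamma A gamma) (R i)) /\
    (forall X Y, (forall i, R i X Y) <-> r_gamma X Y).
Proof.
have [R linR] :=
  choice (fun i => szpilrajn (qlift_realizer_order_partial_order i)).
exists R; apply: (linear_extensions_realize _ _ _ linR).
- by move=> X; have [a ->] := cls_surj X; exists a, a; case: qo.
- by move=> i X Y; apply: r_gamma_qlift => a b; apply: gamma_realizer_order.
- exact: qlift_realizer_order_reverses.
Qed.
End Construction.

Theorem theorem2p13 (A I : Type) (gamma : A -> A -> Prop)
  (alpha : I -> A -> A -> Prop) :
  quasiorder gamma ->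
  half_space_realizer alpha gamma ->
  (exists i j : I, i <> j) ->
  exists R : I -> quot gamma -> quot gamma -> Prop,
    (forall i, linear_extension (@r_gamma A gamma) (R i)) /\
    (forall X Y, (forall i, R i X Y) <-> r_gamma X Y).
Proof.
move=> qo [hs realizes] [i0 [j0 i0_neq_j0]].
have [L [L_po [L_total _]]] := szpilrajn (eq_partial_order (quot gamma)).
exact: (realizer_linear_extensions alpha qo hs realizes i0_neq_j0 L_po L_total).
Qed.
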